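(* Let $U_\alpha=gE_\alpha g^{-1}$ ($1\le\alpha\le r$) with $g\in G_{<0}$ and $W_\beta=XE_\beta z^{-1}X^{-1}$ ($1\le\beta\le r$) with $X\in G_{\geqslant0}$. Set $B_{m\alpha}:=\pi_{\geqslant0}(U_\alpha z^m)$ ($m\ge0$) and $C_{m\beta}:=\pi_{<0}(W_\beta z^{m+1})$ ($m<0$), and assume that for all $\alpha_1,\alpha_2,\beta_1,\beta_2$: $\partial_{m_1\beta_1}(B_{m_2\alpha_2})-\partial_{m_2\alpha_2}(C_{m_1\beta_1})-[C_{m_1\beta_1},B_{m_2\alpha_2}]=0$ for $m_1<0\le m_2$; $\partial_{m_1\alpha_1}(B_{m_2\alpha_2})-\partial_{m_2\alpha_2}(B_{m_1\alpha_1})-[B_{m_1\alpha_1},B_{m_2\alpha_2}]=0$ for $m_1,m_2\ge0$; $\partial_{m_1\beta_1}(C_{m_2\beta_2})-\partial_{m_2\beta_2}(C_{m_1\beta_1})-[C_{m_1\beta_1},C_{m_2\beta_2}]=0$ for $m_1,m_2<0$. Then $(\{U_\alpha\},\{W_\beta\})$ is a solution of the combined $(\mathrm{sl}_n(\mathbb{C}),\mathfrak{t})$-hierarchy.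
   Context: $R$ is a commutative $\mathbb{C}$-algebra with commuting $\mathbb{C}$-linear derivations $\partial_{m\alpha}$, $m\in\mathbb{Z}$, $1\le\alpha\le r$, acting coefficientwise on matrices and on series. $\mathrm{gl}_n(R)[z,z^{-1})$ consists of formal series $\sum_{i=-\infty}^{N}X_iz^i$ and $\mathrm{gl}_n(R)[z^{-1},z)$ of formal series $\sum_{i=-N}^{\infty}X_iz^i$ ($X_i\in\mathrm{gl}_n(R)$), with bracket $[X,Y]=\sum[X_i,Y_j]z^{i+j}$. $\pi_{\geqslant0}$ (resp. $\pi_{<0}$) keeps the terms with $i\ge0$ (resp. $i<0$). $\mathfrak{t}\subset\mathrm{sl}_n(\mathbb{C})$ is commutative of maximal dimension $r$, basis $E_1,\dots,E_r$. $G_{<0}=\{\mathrm{Id}+\sum_{i\ge1}Y_iz^{-i}\mid Y_i\in\mathrm{gl}_n(R)\}$; $G_{\geqslant0}=\{X_0+\sum_{i\ge1}X_iz^i\mid X_i\in\mathrm{gl}_n(R),\ X_0\text{ invertible}\}$. $(\{U_\alpha\},\{W_\beta\})$ is a solution of the combined $(\mathrm{sl}_n(\mathbb{C}),\mathfrak{t})$-hierarchy if: for all $m\ge0$ and all $\alpha_1,\alpha_2,\beta$: $\partial_{m\alpha_1}(U_{\alpha_2})=[\pi_{\geqslant0}(U_{\alpha_1}z^m),U_{\alpha_2}]$ and $\partial_{m\alpha_1}(W_\beta)=[\pi_{\geqslant0}(U_{\alpha_1}z^m),W_\beta]$; and for all $m<0$ and all $\beta_1,\beta_2,\alpha$: $\partial_{m\beta_1}(W_{\beta_2})=[\pi_{<0}(W_{\beta_1}z^{m+1}),W_{\beta_2}]$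 and $\partial_{m\beta_1}(U_\alpha)=[\pi_{<0}(W_{\beta_1}z^{m+1}),U_\alpha]$. *)

From HB Require Import structures.
From mathcomp Require Import all_boot all_order all_algebra.
Set Implicit Arguments. Unset Strict Implicit. Unset Printing Implicit Defensive.
Import Order.TTheory GRing.Theory Num.Theory.
Local Open Scope ring_scope.

(* The Lie algebra t : a commutative subspace of sl_n(C), given by a basis   *)
(* E_1..E_r, whose dimension r is maximal among commutative subspaces.       *)
Section Cartan.
Variables (C : fieldType) (n : nat).

Definition comm_sl_family (k : nat) (F : 'I_k -> 'M[C]_n) : Prop :=
  [/\ forall i, \tr (F i) = 0,
      forall i j, F i *m F j = F j *m F i
    & row_free (\matrix_(i < k) mxvec (F i))].

Definition max_comm_basis (r : nat) (E : 'I_r -> 'M[C]_n) : Prop :=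
  comm_sl_family E /\
  forall (k : nat) (F : 'I_k -> 'M[C]_n), comm_sl_family F -> (k <= r)%N.

End Cartan.

Definition is_Cderivation (C : fieldType) (R : comAlgType C) (d : R -> R) : Prop :=
  [/\ forall x y : R, d (x + y) = d x + d y,
      forall (c : C) (x : R), d (c *: x) = c *: d x
    & forall x y : R, d (x * y) = d x * y + x * d y].

(*  useries : gl_n(R)[z,z^-1)  --  USer N c  represents  sum_j c_j z^(N-j)   *)
(*  lseries : gl_n(R)[z^-1,z)  --  LSer N c  represents  sum_j c_j z^(N+j)   *)
Section Series.
Variables (R : comNzRingType) (n : nat).
Local Notation M := 'M[R]_n.

Record useries := USer { uN : int; uc : nat -> M }.
Record lseries := LSer { lN : int; lc : nat -> M }.

Definition ucoef (s : useries) (k : int) : M :=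
  if k <= uN s then uc s `|uN s - k|%N else 0.
Definition lcoef (s : lseries) (k : int) : M :=
  if lN s <= k then lc s `|k - lN s|%N else 0.

Definition ueqs (s t : useries) : Prop := forall k, ucoef s k = ucoef t k.
Definition leqs (s t : lseries) : Prop := forall k, lcoef s k = lcoef t k.

Definition uconst (A : M) : useries := USer 0 (fun j => if j == 0%N then A else 0).
Definition lconst (A : M) : lseries := LSer 0 (fun j => if j == 0%N then A else 0).
Definition lzinv (A : M) : lseries := LSer (-1) (fun j => if j == 0%N then A else 0).

Definition uone : useries := uconst 1%:M.
Definition lone : lseries := lconst 1%:M.

Definition umul (s t : useries) : useries :=
  USer (uN s + uN t) (fun j => \sum_(i < j.+1) uc s i *m uc t (j - i)%N).
Definition lmul (s t : lseries) : lseries :=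
  LSer (lN s + lN t) (fun j => \sum_(i < j.+1) lc s i *m lc t (j - i)%N).

Definition ubr (s t : useries) : useries :=
  USer (uN s + uN t)
    (fun j => \sum_(i < j.+1) (uc s i *m uc t (j - i)%N - uc t i *m uc s (j - i)%N)).
Definition lbr (s t : lseries) : lseries :=
  LSer (lN s + lN t)
    (fun j => \sum_(i < j.+1) (lc s i *m lc t (j - i)%N - lc t i *m lc s (j - i)%N)).

Definition ushift (s : useries) (m : int) : useries := USer (uN s + m) (uc s).
Definition lshift (s : lseries) (m : int) : lseries := LSer (lN s + m) (lc s).

(* pi_{>=0} of an element of gl_n(R)[z,z^-1) (a polynomial in z), viewed in
   gl_n(R)[z,z^-1) (upos) and in gl_n(R)[z^-1,z) (upos_l) *)
Definition upos (s : useries) : useries :=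
  USer (uN s) (fun j => if 0 <= uN s - j%:Z then uc s j else 0).
Definition upos_l (s : useries) : lseries := LSer 0 (fun j => ucoef s j%:Z).

(* pi_{<0} of an element of gl_n(R)[z^-1,z) (a polynomial in z^-1), viewed in
   gl_n(R)[z^-1,z) (lneg) and in gl_n(R)[z,z^-1) (lneg_u) *)
Definition lneg (s : lseries) : lseries :=
  LSer (lN s) (fun j => if lN s + j%:Z < 0 then lc s j else 0).
Definition lneg_u (s : lseries) : useries := USer (-1) (fun j => lcoef s (-1 - j%:Z)).

Definition uder (d : R -> R) (s : useries) : useries :=
  USer (uN s) (fun j => map_mx d (uc s j)).
Definition lder (d : R -> R) (s : lseries) : lseries :=
  LSer (lN s) (fun j => map_mx d (lc s j)).

Definition in_Gneg (g : useries) : Prop :=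
  (forall k : int, 0 < k -> ucoef g k = 0) /\ ucoef g 0 = 1%:M.
Definition in_Gpos (X : lseries) : Prop :=
  (forall k : int, k < 0 -> lcoef X k = 0) /\
  exists Y : M, lcoef X 0 *m Y = 1%:M /\ Y *m lcoef X 0 = 1%:M.

Variable r : nat.

Definition Bser (U : 'I_r -> useries) (m : int) (a : 'I_r) : useries :=
  upos (ushift (U a) m).
Definition Bser_l (U : 'I_r -> useries) (m : int) (a : 'I_r) : lseries :=
  upos_l (ushift (U a) m).
Definition Cser (W : 'I_r -> lseries) (m : int) (b : 'I_r) : lseries :=
  lneg (lshift (W b) (m + 1)).
Definition Cser_u (W : 'I_r -> lseries) (m : int) (b : 'I_r) : useries :=
  lneg_u (lshift (W b) (m + 1)).

Definition combined_solution (D : int -> 'I_r -> R -> R)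
    (U : 'I_r -> useries) (W : 'I_r -> lseries) : Prop :=
  [/\ forall (m : nat) (a1 a2 : 'I_r),
        ueqs (uder (D m%:Z a1) (U a2)) (ubr (Bser U m%:Z a1) (U a2)),
      forall (m : nat) (a1 b : 'I_r),
        leqs (lder (D m%:Z a1) (W b)) (lbr (Bser_l U m%:Z a1) (W b)),
      forall (m : int), m < 0 -> forall b1 b2 : 'I_r,
        leqs (lder (D m b1) (W b2)) (lbr (Cser W m b1) (W b2))
    & forall (m : int), m < 0 -> forall (b1 a : 'I_r),
        ueqs (uder (D m b1) (U a)) (ubr (Cser_u W m b1) (U a))].

End Series.

Definition emb (C : fieldType) (R : comAlgType C) (n : nat) (A : 'M[C]_n) : 'M[R]_n :=
  map_mx (fun c => c%:A) A.

Definition Ufam (C : fieldType) (R : comAlgType C) (n r : nat)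
    (E : 'I_r -> 'M[C]_n) (g ginv : useries R n) (a : 'I_r) : useries R n :=
  umul (umul g (uconst (emb R (E a)))) ginv.
Definition Wfam (C : fieldType) (R : comAlgType C) (n r : nat)
    (E : 'I_r -> 'M[C]_n) (X Xinv : lseries R n) (b : 'I_r) : lseries R n :=
  lmul (lmul X (lzinv (emb R (E b)))) Xinv.

(* Everything is reduced to coefficient functions [int -> 'M_n], on which the
   products of series become convolutions.  Since [g] has no positive powers
   and [g_0 = 1], so does [ginv], hence [U_a = g E_a ginv] has no positive
   powers and [U_a(0) = E_a]; dually [W_b = X E_b z^-1 Xinv] has no powers below
   [z^-1].  The [U_a] commute with each other, and so do the [W_b].
   A flow equation [d_(m a) Y = [P, Y]] is then checked coefficientwise.  At
   the coefficients where [Y] is trivial (the constant [E_a] of [U_a], or zero)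
   both sides vanish: the bracket is either zero for degree reasons or, after
   dropping the truncation of [P], a bracket of commuting series.  At each
   remaining coefficient it is one coefficient of a zero-curvature equation in
   which the second derivative term vanishes, and in which the truncation of
   the second series inside the bracket is invisible for degree reasons. *)

From Pilot Require Import Defs.
From HB Require Import structures.
From mathcomp Require Import all_boot all_order all_algebra.
From mathcomp Require Import zify.
From mathcomp Require Import boolp classical_sets fsbigop.
Import Order.TTheory GRing.Theory Num.Theory.
Set Implicit Arguments. Unset Strict Implicit. Unset Printing Implicit Defensive.
Local Open Scope ring_scope.
Local Open Scope classical_set_scope.

Section FiniteSupport.
Variable V : zmodType.
Implicit Types (F : int -> V) (lo hi : int).

Definition supported F lo hi := forall p, F p != 0 -> lo <= p <= hi.

Definition window lo hi : seq int := [seq hi - i%:Z | i <- iota 0 (absz (hi - lo)).+1].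

Lemma window_uniq lo hi : uniq (window lo hi).
Proof.
rewrite map_inj_uniq ?iota_uniq // => i j /eqP.
by rewrite (can2_eq (subKr hi) (subKr hi)) subKr => /eqP [].
Qed.

Lemma mem_window lo hi p : lo <= p <= hi -> p \in window lo hi.
Proof.
move=> hp; apply/mapP; exists (absz (hi - p)); last by lia.
by rewrite mem_iota; lia.
Qed.

Lemma fsum_seq F (s : seq int) : uniq s -> (forall p, F p != 0 -> p \in s) ->
  \sum_(p \in [set: int]) F p = \sum_(p <- s) F p.
Proof.
move=> us Fs; rewrite [RHS]fsbig_seq //; apply/esym/fsbig_widen => // p [_ /= sp].
by have [//|/Fs] := eqVneq (F p) 0.
Qed.

Lemma fsum_window F lo hi : supported F lo hi ->
  \sum_(p \in [set: int]) F p = \sum_(p <- window lo hi) F p.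
Proof. by move=> FS; apply: fsum_seq (window_uniq _ _) _ => p /FS /mem_window. Qed.

Lemma fsum_exchange (G : int -> int -> V) lo1 hi1 lo2 hi2 :
  (forall p q, G p q != 0 -> lo1 <= p <= hi1 /\ lo2 <= q <= hi2) ->
  \sum_(p \in [set: int]) \sum_(q \in [set: int]) G p q =
  \sum_(q \in [set: int]) \sum_(p \in [set: int]) G p q.
Proof.
move=> GS.
have inner1 p : \sum_(q \in [set: int]) G p q = \sum_(q <- window lo2 hi2) G p q.
  by apply: fsum_window => q /(GS p q) [].
have inner2 q : \sum_(p \in [set: int]) G p q = \sum_(p <- window lo1 hi1) G p q.
  by apply: fsum_window => p /(GS p q) [].
rewrite (eq_fsbigr _ _ (fun p _ => inner1 p)) (eq_fsbigr _ _ (fun q _ => inner2 q)).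
rewrite (fsum_window (lo := lo1) (hi := hi1)); last first.
  move=> p; apply: contraR => hp; rewrite big1 // => q _.
  by have [//|/(GS p q) [pw]] := eqVneq (G p q) 0; rewrite pw in hp.
rewrite (fsum_window (lo := lo2) (hi := hi2)); first exact: exchange_big.
move=> q; apply: contraR => hq; rewrite big1 // => p _.
by have [//|/(GS p q) [_ qw]] := eqVneq (G p q) 0; rewrite qw in hq.
Qed.

End FiniteSupport.

Section CoefficientFunctions.
Variable V : zmodType.
Implicit Types (f : int -> V) (a m : int).

Definition vanish_above f a := forall p, a < p -> f p = 0.
Definition vanish_below f a := forall p, p < a -> f p = 0.
Definition bdd_above f := exists a, vanish_above f a.

Definition zshift f m p := f (p - m).
Definition zflip f p := f (- p).
Definition nonneg_part f p := if 0 <= p then f p else 0.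
Definition neg_part f p := if p < 0 then f p else 0.
Definition monomial (i : int) (A : V) p := if p == i then A else 0.

Lemma vanish_above_le f a p : vanish_above f a -> f p != 0 -> p <= a.
Proof. by move=> fa; apply: contraR; rewrite -ltNge => /fa ->. Qed.

Lemma vanish_above_zshift f a m : vanish_above f a -> vanish_above (zshift f m) (a + m).
Proof. by move=> fa p pam; apply: fa; lia. Qed.

Lemma vanish_below_zshift f a m : vanish_below f a -> vanish_below (zshift f m) (a + m).
Proof. by move=> fa p pam; apply: fa; lia. Qed.

Lemma vanish_above_nonneg_part f a : vanish_above f a -> vanish_above (nonneg_part f) a.
Proof. by move=> fa p ap; rewrite /nonneg_part fa ?if_same. Qed.

Lemma vanish_below_nonneg_part f : vanish_below (nonneg_part f) 0.
Proof. by move=> p p0; rewrite /nonneg_part ifF //; apply/negbTE; lia. Qed.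

Lemma vanish_above_neg_part f : vanish_above (neg_part f) (-1).
Proof. by move=> p p0; rewrite /neg_part ifF //; apply/negbTE; lia. Qed.

Lemma vanish_below_neg_part f a : vanish_below f a -> vanish_below (neg_part f) a.
Proof. by move=> fa p pa; rewrite /neg_part fa ?if_same. Qed.

Lemma monomial_vanish_above i (A : V) : vanish_above (monomial i A) i.
Proof. by move=> p ip; rewrite /monomial ifF //; apply/negbTE; lia. Qed.

Lemma monomial_bdd_above i (A : V) : bdd_above (monomial i A).
Proof. by exists i; apply: monomial_vanish_above. Qed.

Lemma zflipK f : zflip (zflip f) = f.
Proof. by apply/funext => p; rewrite /zflip opprK. Qed.

Lemma vanish_below_zflip f a : vanish_above f a -> vanish_below (zflip f) (- a).
Proof. by move=> fa p pa; apply: fa; lia. Qed.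

End CoefficientFunctions.

Section Convolution.
Variables (R : pzRingType) (n : nat).
Local Notation M := 'M[R]_n.
Implicit Types (f g h : int -> M) (A B : M).

(* The coefficient of [z^k] in a product of series; the finitely supported
   sum is [0] when the support is infinite, which never happens below since
   the factors are bounded on the same side. *)
Definition conv f g k : M := \sum_(p \in [set: int]) f p *m g (k - p).
Definition brc f g k : M := conv f g k - conv g f k.

Lemma mulmx_neq0 (A B : M) : A *m B != 0 -> A != 0 /\ B != 0.
Proof. by move=> AB; split; apply: contraNneq AB => ->; rewrite ?mul0mx ?mulmx0. Qed.

Lemma conv_vanish_above f g a b :
  vanish_above f a -> vanish_above g b -> vanish_above (conv f g) (a + b).
Proof.
move=> fa gb k abk; apply: fsbig1 => p _.
by case: (lerP p a) => pa; [rewrite gb ?mulmx0 //; lia | rewrite fa ?mul0mx].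
Qed.

Lemma conv_vanish_below f g a b :
  vanish_below f a -> vanish_below g b -> vanish_below (conv f g) (a + b).
Proof.
move=> fa gb k abk; apply: fsbig1 => p _.
by case: (lerP a p) => pa; [rewrite gb ?mulmx0 //; lia | rewrite fa ?mul0mx].
Qed.

Lemma conv_bdd_above f g : bdd_above f -> bdd_above g -> bdd_above (conv f g).
Proof. by move=> [a fa] [b gb]; exists (a + b); apply: conv_vanish_above. Qed.

Lemma conv_top f g a b : vanish_above f a -> vanish_above g b ->
  conv f g (a + b) = f a *m g b.
Proof.
move=> fa gb; rewrite /conv (@fsum_seq _ _ [:: a]) //.
  by rewrite big_seq1 [a + b]addrC addrK.
move=> p /mulmx_neq0 [/(vanish_above_le fa) pa /(vanish_above_le gb) pb].
by rewrite inE; apply/eqP; lia.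
Qed.

Lemma conv_zshiftl f g m k : conv (zshift f m) g k = conv f g (k - m).
Proof.
rewrite /conv (reindex_fsbigT (fun q => q + m)); last by exists (fun p => p - m) => q; lia.
by apply: eq_fsbigr => q _; rewrite /zshift addrK; congr (_ *m g _); lia.
Qed.

Lemma conv_zshiftr f g m k : conv f (zshift g m) k = conv f g (k - m).
Proof. by apply: eq_fsbigr => p _; rewrite /zshift; congr (_ *m g _); lia. Qed.

Lemma conv_zflip f g k : conv (zflip f) (zflip g) k = conv f g (- k).
Proof.
rewrite /conv (reindex_fsbigT (fun q => - q)); last by exists (fun p => - p) => q; lia.
by apply: eq_fsbigr => q _; rewrite /zflip opprK; congr (_ *m g _); lia.
Qed.

Lemma conv_monomiall i A g k : conv (monomial i A) g k = A *m g (k - i).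
Proof.
rewrite /conv (@fsum_seq _ _ [:: i]) // ?big_seq1 /monomial ?eqxx //.
by move=> p /mulmx_neq0 []; rewrite inE; case: (p =P i) => [->|]; rewrite ?eqxx.
Qed.

Lemma conv_monomial i j A B : conv (monomial i A) (monomial j B) = monomial (i + j) (A *m B).
Proof.
apply/funext => k; rewrite conv_monomiall /monomial.
have -> : (k - i == j) = (k == i + j) by apply/eqP/eqP; lia.
by case: eqP; rewrite ?mulmx0.
Qed.

Lemma fsum_mulmxr (F : int -> M) A lo hi : supported F lo hi ->
  (\sum_(p \in [set: int]) F p) *m A = \sum_(p \in [set: int]) F p *m A.
Proof.
move=> FS; rewrite (fsum_window FS) (@fsum_window _ _ lo hi) ?mulmx_suml // => p.
by move=> /mulmx_neq0 [/FS].
Qed.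

Lemma fsum_mulmxl (F : int -> M) A lo hi : supported F lo hi ->
  A *m (\sum_(p \in [set: int]) F p) = \sum_(p \in [set: int]) A *m F p.
Proof.
move=> FS; rewrite (fsum_window FS) (@fsum_window _ _ lo hi) ?mulmx_sumr // => p.
by move=> /mulmx_neq0 [_ /FS].
Qed.

Lemma conv_assoc f g h : bdd_above f -> bdd_above g -> bdd_above h ->
  conv (conv f g) h = conv f (conv g h).
Proof.
move=> [a fa] [b gb] [c hc]; apply/funext => k.
pose G p q := f q *m g (p - q) *m h (k - p).
have supp p q : G p q != 0 -> [/\ q <= a, p - q <= b & k - p <= c].
  move=> /mulmx_neq0 [/mulmx_neq0 [fq gpq] hkp].
  by split; [apply: vanish_above_le fq | apply: vanish_above_le gpq | apply: vanish_above_le hkp].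
have expandl p : conv f g p *m h (k - p) = \sum_(q \in [set: int]) G p q.
  rewrite (@fsum_mulmxr _ _ (p - b) a) // => q /mulmx_neq0 [fq gpq].
  have := vanish_above_le fa fq; have := vanish_above_le gb gpq; lia.
have expandr q : f q *m conv g h (k - q) = \sum_(p \in [set: int]) G p q.
  rewrite (@fsum_mulmxl _ _ (k - q - c) b); last first.
    move=> p /mulmx_neq0 [gp hp].
    have := vanish_above_le gb gp; have := vanish_above_le hc hp; lia.
  rewrite (reindex_fsbigT (fun p => p - q)); last by exists (fun p => p + q) => p; lia.
  by apply: eq_fsbigr => p _; rewrite /G mulmxA; congr (_ *m h _); lia.
rewrite /conv (eq_fsbigr _ _ (fun p _ => expandl p)) (eq_fsbigr _ _ (fun q _ => expandr q)).
apply: (@fsum_exchange _ _ (k - c) (a + b) (k - c - b) a) => p q /supp [] *; lia.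
Qed.

Lemma conv1l f : conv (monomial 0 1%:M) f = f.
Proof. by apply/funext => k; rewrite conv_monomiall subr0 mul1mx. Qed.

Lemma brcN f g k : brc g f k = - brc f g k.
Proof. by rewrite /brc opprB. Qed.

Lemma brc_eql f f' g k : (forall p, f p != f' p -> g (k - p) = 0) ->
  brc f g k = brc f' g k.
Proof.
move=> ff'; rewrite /brc; congr (_ - _); apply: eq_fsbigr => p _.
  by have [->|/ff' ->] := eqVneq (f p) (f' p); rewrite ?mulmx0.
have [->//|/ff'] := eqVneq (f (k - p)) (f' (k - p)).
by rewrite (_ : k - (k - p) = p) => [->|]; rewrite ?mul0mx //; lia.
Qed.

Lemma brc_nonneg_partl f g k : vanish_above g k -> brc (nonneg_part f) g k = brc f g k.
Proof.
move=> gk; apply: brc_eql => p; rewrite /nonneg_part.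
by case: lerP => [|p0 _]; [rewrite eqxx | apply: gk; lia].
Qed.

Lemma brc_nonneg_partr f g k : vanish_above f k -> brc f (nonneg_part g) k = brc f g k.
Proof. by move=> fk; rewrite brcN brc_nonneg_partl // -brcN. Qed.

Lemma brc_neg_partl f g k : vanish_below g (k + 1) -> brc (neg_part f) g k = brc f g k.
Proof.
move=> gk; apply: brc_eql => p; rewrite /neg_part.
by case: ltrP => [|p0 _]; [rewrite eqxx | apply: gk; lia].
Qed.

Lemma brc_neg_partr f g k : vanish_below f (k + 1) -> brc f (neg_part g) k = brc f g k.
Proof. by move=> fk; rewrite brcN brc_neg_partl // -brcN. Qed.

Lemma brc_zshiftl f g m k : brc (zshift f m) g k = brc f g (k - m).
Proof. by rewrite /brc conv_zshiftl conv_zshiftr. Qed.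

Lemma brc_zshiftr f g m k : brc f (zshift g m) k = brc f g (k - m).
Proof. by rewrite brcN brc_zshiftl -brcN. Qed.

Lemma brc_vanish_above f g a b k : vanish_above f a -> vanish_above g b -> a + b < k ->
  brc f g k = 0.
Proof.
move=> fa gb abk; rewrite /brc (conv_vanish_above fa gb) // (conv_vanish_above gb fa) ?subr0 //.
by rewrite addrC.
Qed.

Lemma brc_vanish_below f g a b k : vanish_below f a -> vanish_below g b -> k < a + b ->
  brc f g k = 0.
Proof.
move=> fa gb abk; rewrite /brc (conv_vanish_below fa gb) // (conv_vanish_below gb fa) ?subr0 //.
by rewrite addrC.
Qed.

Lemma brc_zflip f g k : brc (zflip f) (zflip g) k = brc f g (- k).
Proof. by rewrite /brc !conv_zflip. Qed.

(* Descent on the top coefficient: [Q i = Q i *m P 0 *m Y = (conv Q P) i *m Y = 0]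
   for [0 < i]. *)
Lemma inverse_vanish_above P Q Y : vanish_above P 0 -> P 0 *m Y = 1%:M ->
  bdd_above Q -> conv Q P = monomial 0 1%:M -> vanish_above Q 0.
Proof.
move=> P0 PY [a Qa] QP.
suff down (i : nat) : vanish_above Q i%:Z -> vanish_above Q 0.
  by apply: (down `|a|%N) => p ap; apply: Qa; lia.
elim: i => [//|i IH] Qi; apply: IH => p ip.
have [pi|] := eqVneq p i.+1%:Z; last by move=> ?; apply: Qi; lia.
by rewrite pi -[Q _]mulmx1 -PY mulmxA -(conv_top Qi P0) addr0 QP /monomial mul0mx.
Qed.

Definition conjugate (P f Pinv : int -> M) := conv (conv P f) Pinv.

Lemma conv_conjugate (P Pinv f g : int -> M) :
  bdd_above P -> bdd_above Pinv -> bdd_above f -> bdd_above g -> conv Pinv P = monomial 0 1%:M ->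
  conv (conjugate P f Pinv) (conjugate P g Pinv) = conjugate P (conv f g) Pinv.
Proof.
move=> bP bPi bf bg PiP.
have [bPf bPg] := (conv_bdd_above bP bf, conv_bdd_above bP bg).
have cancel_inv : conv Pinv (conv (conv P g) Pinv) = conv g Pinv.
  by rewrite -(conv_assoc bPi bPg bPi) -(conv_assoc bPi bP bg) PiP conv1l.
rewrite /conjugate (conv_assoc bPf bPi (conv_bdd_above bPg bPi)) cancel_inv.
by rewrite -(conv_assoc bPf bg bPi) (conv_assoc bP bf bg).
Qed.

Lemma conjugate_comm (P Pinv f g : int -> M) :
  bdd_above P -> bdd_above Pinv -> bdd_above f -> bdd_above g -> conv Pinv P = monomial 0 1%:M ->
  conv f g = conv g f ->
  conv (conjugate P f Pinv) (conjugate P g Pinv) = conv (conjugate P g Pinv) (conjugate P f Pinv).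
Proof. by move=> bP bPi bf bg PiP fg; rewrite !conv_conjugate // fg. Qed.

End Convolution.

Section BCcoefficients.
Variables (V : zmodType) (r : nat).
Implicit Types (u w : 'I_r -> int -> V) (a b : 'I_r) (m k : int).

Definition Bcoef u m a := nonneg_part (zshift (u a) m).
Definition Ccoef w m b := neg_part (zshift (w b) (m + 1)).

Lemma Bcoef_nonneg u m a k : 0 <= k -> Bcoef u m a k = u a (k - m).
Proof. by rewrite /Bcoef /nonneg_part /zshift => ->. Qed.

Lemma Bcoef_neg u m a k : k < 0 -> Bcoef u m a k = 0.
Proof. by rewrite /Bcoef /nonneg_part ltNge => /negbTE ->. Qed.

Lemma Ccoef_neg w m b k : k < 0 -> Ccoef w m b k = w b (k - (m + 1)).
Proof. by rewrite /Ccoef /neg_part /zshift => ->. Qed.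

Lemma Ccoef_nonneg w m b k : 0 <= k -> Ccoef w m b k = 0.
Proof. by rewrite /Ccoef /neg_part ltNge => ->. Qed.

End BCcoefficients.

Section ZeroCurvature.
Variables (R : pzRingType) (n r : nat).
Local Notation M := 'M[R]_n.
Variables (d : int -> 'I_r -> M -> M) (u w : 'I_r -> int -> M).
Hypothesis d0 : forall m a, d m a 0 = 0.
Hypothesis u_above : forall a, vanish_above (u a) 0.
Hypothesis w_below : forall b, vanish_below (w b) (-1).
Hypothesis d_u0 : forall m a1 a2, d m a1 (u a2 0) = 0.
Hypothesis u_comm : forall a1 a2 k, brc (u a1) (u a2) k = 0.
Hypothesis w_comm : forall b1 b2 k, brc (w b1) (w b2) k = 0.
Local Notation B := (Bcoef u).
Local Notation C := (Ccoef w).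
Hypothesis curvCB : forall (m1 : int) (m2 : nat) b1 a2, m1 < 0 -> forall k,
  d m1 b1 (B m2 a2 k) - d m2 a2 (C m1 b1 k) - brc (C m1 b1) (B m2 a2) k = 0.
Hypothesis curvBB : forall (m1 m2 : nat) a1 a2 k,
  d m1 a1 (B m2 a2 k) - d m2 a2 (B m1 a1 k) - brc (B m1 a1) (B m2 a2) k = 0.
Hypothesis curvCC : forall (m1 m2 : int) b1 b2, m1 < 0 -> m2 < 0 -> forall k,
  d m1 b1 (C m2 b2 k) - d m2 b2 (C m1 b1 k) - brc (C m1 b1) (C m2 b2) k = 0.

Lemma Bcoef_vanish_above m a : vanish_above (B m a) m.
Proof.
by have := vanish_above_zshift (m := m) (u_above a); rewrite add0r => /vanish_above_nonneg_part.
Qed.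

Lemma Ccoef_vanish_below m b : vanish_below (C m b) m.
Proof.
have := vanish_below_zshift (m := m + 1) (w_below b).
by rewrite (_ : -1 + (m + 1) = m) => [/vanish_below_neg_part|] //; lia.
Qed.

Lemma d_u_nonneg m a1 a2 k : 0 <= k -> d m a1 (u a2 k) = 0.
Proof.
by rewrite le_eqVlt => /orP [/eqP <-|/u_above ->]; rewrite ?d_u0 ?d0.
Qed.

Lemma d_w_below m b1 b2 k : k < -1 -> d m b1 (w b2 k) = 0.
Proof. by move=> /w_below ->; rewrite d0. Qed.

(* Each flow equation is one coefficient of a zero-curvature equation, read at
   a place where the derivative of the other truncated series vanishes. *)
Lemma flow_B_u (m : nat) a1 a2 k : d m a1 (u a2 k) = brc (B m a1) (u a2) k.
Proof.
have [k0|k0] := lerP 0 k.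
  rewrite d_u_nonneg // brc_nonneg_partl ?brc_zshiftl ?u_comm // => p kp.
  by apply: u_above; lia.
have := curvBB m (m + `|k|) a1 a2 m.
rewrite !Bcoef_nonneg // subrr d_u0 subr0 (_ : m%:Z - (m + `|k|)%N%:Z = k); last by lia.
move=> /subr0_eq ->.
rewrite brc_nonneg_partr ?brc_zshiftr; last exact: Bcoef_vanish_above.
by congr (brc _ _ _); lia.
Qed.

Lemma flow_B_w (m : nat) a1 b k : d m a1 (w b k) = brc (B m a1) (w b) k.
Proof.
have [k1|k1] := ltrP k (-1).
  by rewrite d_w_below // (brc_vanish_below (vanish_below_nonneg_part _) (w_below b)) // add0r.
have k2 : - k - 2 < 0 by lia.
have := curvCB m b a1 k2 (-1).
rewrite Bcoef_neg // d0 sub0r Ccoef_neg // (_ : -1 - (- k - 2 + 1) = k); last by lia.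
move/eqP; rewrite subr_eq0 eqr_oppLR => /eqP ->.
rewrite -brcN brc_neg_partr ?brc_zshiftr; last by rewrite addNr; apply: vanish_below_nonneg_part.
by congr (brc _ _ _); lia.
Qed.

Lemma flow_C_w m b1 b2 k : m < 0 -> d m b1 (w b2 k) = brc (C m b1) (w b2) k.
Proof.
move=> m0; have [k1|k1] := ltrP k (-1).
  rewrite d_w_below // brc_neg_partl ?brc_zshiftl ?w_comm // => p pk.
  by apply: w_below; lia.
have m2 : m - k - 2 < 0 by lia.
have := curvCC b1 b2 m0 m2 (m - 1).
have [m1 e2 ek] : [/\ m - 1 < 0, m - 1 - (m + 1) = -2 & m - 1 - (m - k - 2 + 1) = k].
  by split; lia.
rewrite !Ccoef_neg // e2 ek (w_below b1) // d0 subr0 => /subr0_eq ->.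
rewrite brc_neg_partr ?brc_zshiftr; last by rewrite subrK; apply: Ccoef_vanish_below.
by congr (brc _ _ _); lia.
Qed.

Lemma flow_C_u m b1 a k : m < 0 -> d m b1 (u a k) = brc (C m b1) (u a) k.
Proof.
move=> m0; have [k0|k0] := lerP 0 k.
  by rewrite d_u_nonneg // (brc_vanish_above (vanish_above_neg_part _) (u_above a)) //; lia.
have := curvCB `|k| b1 a m0 0.
rewrite Bcoef_nonneg // Ccoef_nonneg // d0 subr0 (_ : 0 - `|k|%:Z = k); last by lia.
move=> /subr0_eq ->.
rewrite brc_nonneg_partr ?brc_zshiftr; last first.
  by move=> p p0; apply: vanish_above_neg_part; lia.
by congr (brc _ _ _); lia.
Qed.

End ZeroCurvature.

Section SeriesCoefficients.
Variables (R : comNzRingType) (n : nat).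
Local Notation M := 'M[R]_n.
Implicit Types (s t : useries R n) (x y : lseries R n).

Lemma ucoef_vanish_above s : vanish_above (ucoef s) (uN s).
Proof. by move=> k sk; rewrite /ucoef leNgt sk. Qed.

Lemma ucoef_umul s t : ucoef (umul s t) = conv (ucoef s) (ucoef t).
Proof.
apply/funext => k.
have supp p : ucoef s p *m ucoef t (k - p) != 0 -> p <= uN s /\ k - uN t <= p.
  move=> /mulmx_neq0 [/(vanish_above_le (@ucoef_vanish_above s)) sp].
  by move=> /(vanish_above_le (@ucoef_vanish_above t)) tp; split; lia.
rewrite /conv {1}/ucoef /=; case: ifP => hk; last first.
  symmetry; apply: fsbig1 => p _.
  by have [//|/supp] := eqVneq (ucoef s p *m ucoef t (k - p)) 0; move/negbT: hk; lia.
set j := absz (uN s + uN t - k)%R.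
rewrite (@fsum_window _ _ (uN s - j%:Z) (uN s)); last by move=> p /supp; lia.
rewrite /window big_map (_ : absz (uN s - (uN s - j%:Z))%R = j); last by lia.
rewrite -[iota 0 j.+1]/(index_iota 0 j.+1) big_mkord; apply: eq_bigr => i _.
have ij := ltn_ord i.
rewrite /ucoef ifT; last by lia.
rewrite ifT; last by lia.
by congr (uc s _ *m uc t _); lia.
Qed.

Lemma ucoef_ubr s t k : ucoef (ubr s t) k = brc (ucoef s) (ucoef t) k.
Proof.
rewrite /brc -!ucoef_umul /ucoef /= [uN t + uN s]addrC.
by case: ifP => _; rewrite ?subr0 ?sumrB.
Qed.

(* An lseries in [z] is an useries in [z^-1]. *)
Definition uflip x : useries R n := USer (- lN x) (lc x).

Lemma lcoef_uflip x : lcoef x = zflip (ucoef (uflip x)).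
Proof.
apply/funext => k; rewrite /lcoef /zflip /ucoef /= lerN2.
by case: ifP => // _; congr (lc x _); lia.
Qed.

Lemma ucoef_uflip_lmul x y : ucoef (uflip (lmul x y)) = ucoef (umul (uflip x) (uflip y)).
Proof. by apply/funext => k; rewrite /ucoef /= opprD. Qed.

Lemma lcoef_lmul x y : lcoef (lmul x y) = conv (lcoef x) (lcoef y).
Proof.
apply/funext => k.
by rewrite !lcoef_uflip conv_zflip /zflip ucoef_uflip_lmul ucoef_umul.
Qed.

Lemma lcoef_lbr x y k : lcoef (lbr x y) k = brc (lcoef x) (lcoef y) k.
Proof.
rewrite /brc -!lcoef_lmul /lcoef /= [lN y + lN x]addrC.
by case: ifP => _; rewrite ?subr0 ?sumrB.
Qed.

Lemma ucoef_uconst (A : M) : ucoef (uconst A) = monomial 0 A.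
Proof.
apply/funext => k; rewrite /ucoef /monomial /=.
by case: (ltgtP k 0) => [k0|k0|->] //; rewrite ifF //; apply/negbTE; lia.
Qed.

Lemma ucoef_uflip_lconst (A : M) : ucoef (uflip (lconst A)) = monomial 0 A.
Proof. by rewrite -ucoef_uconst; apply/funext => k; rewrite /ucoef /= oppr0. Qed.

Lemma ucoef_uflip_lzinv (A : M) : ucoef (uflip (lzinv A)) = monomial 1 A.
Proof.
apply/funext => k; rewrite /ucoef /monomial /= opprK.
by case: (ltgtP k 1) => [k1|k1|->] //; rewrite ifF //; apply/negbTE; lia.
Qed.

Lemma ucoef_ushift s m : ucoef (ushift s m) = zshift (ucoef s) m.
Proof.
apply/funext => k; rewrite /ucoef /zshift /=.
have -> : (k - m <= uN s) = (k <= uN s + m) by apply/idP/idP; lia.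
by case: ifP => // _; congr (uc s _); lia.
Qed.

Lemma lcoef_lshift x m : lcoef (Defs.lshift x m) = zshift (lcoef x) m.
Proof.
apply/funext => k; rewrite /lcoef /zshift /=.
have -> : (lN x <= k - m) = (lN x + m <= k) by apply/idP/idP; lia.
by case: ifP => // _; congr (lc x _); lia.
Qed.

Lemma ucoef_upos s : ucoef (upos s) = nonneg_part (ucoef s).
Proof.
apply/funext => k; rewrite /ucoef /nonneg_part /=.
case: (lerP 0 k) => k0; case: ifP => // sk.
  by rewrite ifT //; lia.
by rewrite ifF //; apply/negbTE; lia.
Qed.

Lemma lcoef_upos_l s : lcoef (upos_l s) = nonneg_part (ucoef s).
Proof.
apply/funext => k; rewrite /lcoef /nonneg_part /= subr0.
by case: ifP => // k0; congr (ucoef s _); lia.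
Qed.

Lemma lcoef_lneg x : lcoef (lneg x) = neg_part (lcoef x).
Proof.
apply/funext => k; rewrite /lcoef /neg_part /=.
case: (ltrP k 0) => k0; case: ifP => // xk.
  by rewrite ifT //; lia.
by rewrite ifF //; apply/negbTE; lia.
Qed.

Lemma ucoef_lneg_u x : ucoef (lneg_u x) = neg_part (lcoef x).
Proof.
apply/funext => k; rewrite /ucoef /neg_part /=.
case: (ltrP k 0) => k0; last by rewrite ifF //; apply/negbTE; lia.
by rewrite ifT; [congr (lcoef x _) | ]; lia.
Qed.

Lemma ucoef_uder (d : R -> R) s k : d 0 = 0 -> ucoef (uder d s) k = map_mx d (ucoef s k).
Proof.
move=> d0; rewrite /ucoef /=; case: ifP => // _.
by apply/matrixP => i j; rewrite !mxE d0.
Qed.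

Lemma lcoef_lder (d : R -> R) x k : d 0 = 0 -> lcoef (lder d x) k = map_mx d (lcoef x k).
Proof.
move=> d0; rewrite /lcoef /=; case: ifP => // _.
by apply/matrixP => i j; rewrite !mxE d0.
Qed.

Variable r : nat.
Implicit Types (U : 'I_r -> useries R n) (W : 'I_r -> lseries R n).

Lemma ucoef_Bser U m a : ucoef (Bser U m a) = Bcoef (fun a => ucoef (U a)) m a.
Proof. by rewrite /Bser ucoef_upos ucoef_ushift. Qed.

Lemma lcoef_Bser_l U m a : lcoef (Bser_l U m a) = Bcoef (fun a => ucoef (U a)) m a.
Proof. by rewrite /Bser_l lcoef_upos_l ucoef_ushift. Qed.

Lemma lcoef_Cser W m b : lcoef (Cser W m b) = Ccoef (fun b => lcoef (W b)) m b.
Proof. by rewrite /Cser lcoef_lneg lcoef_lshift. Qed.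

Lemma ucoef_Cser_u W m b : ucoef (Cser_u W m b) = Ccoef (fun b => lcoef (W b)) m b.
Proof. by rewrite /Cser_u ucoef_lneg_u lcoef_lshift. Qed.

End SeriesCoefficients.

Section Dressing.
Variables (C : fieldType) (R : comAlgType C) (n r : nat) (E : 'I_r -> 'M[C]_n).
Hypothesis E_comm : forall a b, E a *m E b = E b *m E a.
Local Notation M := 'M[R]_n.
Local Notation Em a := (emb R (E a)).

Lemma monomial_comm i a b :
  conv (monomial i (Em a)) (monomial i (Em b)) = conv (monomial i (Em b)) (monomial i (Em a)).
Proof. by rewrite !conv_monomial /emb -!(map_mxM (GRing.in_alg R)) E_comm. Qed.

Section Negative.
Variables (g ginv : useries R n).
Hypotheses (hg : in_Gneg g) (hginv : ueqs (umul ginv g) (uone R n)).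

Lemma Ufam_coef a :
  ucoef (Ufam E g ginv a) = conjugate (ucoef g) (monomial 0 (Em a)) (ucoef ginv).
Proof. by rewrite /Ufam !ucoef_umul ucoef_uconst. Qed.

Lemma ginv_conv : conv (ucoef ginv) (ucoef g) = monomial 0 1%:M.
Proof. by rewrite -ucoef_umul -ucoef_uconst; apply/funext => k; apply: hginv. Qed.

Lemma g_vanish_above : vanish_above (ucoef g) 0.
Proof. by move=> k; apply: hg.1. Qed.

Lemma ginv_vanish_above : vanish_above (ucoef ginv) 0.
Proof.
apply: (inverse_vanish_above g_vanish_above (Y := 1%:M)) ginv_conv.
  by rewrite hg.2 mulmx1.
by exists (uN ginv); apply: ucoef_vanish_above.
Qed.

Lemma ginv_coef0 : ucoef ginv 0 = 1%:M.
Proof.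
have := conv_top ginv_vanish_above g_vanish_above.
by rewrite addr0 ginv_conv hg.2 mulmx1 /monomial eqxx.
Qed.

Lemma gE_vanish_above a : vanish_above (conv (ucoef g) (monomial 0 (Em a))) 0.
Proof.
by have := conv_vanish_above g_vanish_above (@monomial_vanish_above _ 0 (Em a)); rewrite addr0.
Qed.

Lemma Ufam_vanish_above a : vanish_above (ucoef (Ufam E g ginv a)) 0.
Proof.
rewrite Ufam_coef.
by have := conv_vanish_above (gE_vanish_above a) ginv_vanish_above; rewrite addr0.
Qed.

Lemma Ufam_coef0 a : ucoef (Ufam E g ginv a) 0 = Em a.
Proof.
rewrite Ufam_coef /conjugate.
have := conv_top (gE_vanish_above a) ginv_vanish_above; rewrite addr0 => ->.
have := conv_top g_vanish_above (@monomial_vanish_above _ 0 (Em a)); rewrite addr0 => ->.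
by rewrite hg.2 ginv_coef0 /monomial eqxx mul1mx mulmx1.
Qed.

Lemma Ufam_comm a1 a2 k : brc (ucoef (Ufam E g ginv a1)) (ucoef (Ufam E g ginv a2)) k = 0.
Proof.
rewrite !Ufam_coef /brc.
rewrite (conjugate_comm _ _ (monomial_bdd_above _ _) (monomial_bdd_above _ _) ginv_conv).
- by rewrite subrr.
- by exists 0; apply: g_vanish_above.
- by exists 0; apply: ginv_vanish_above.
- exact: monomial_comm.
Qed.
End Negative.

Section Positive.
Variables (X Xinv : lseries R n).
Hypotheses (hX : in_Gpos X) (hXinv : leqs (lmul Xinv X) (lone R n)).
Local Notation FX := (ucoef (uflip X)).
Local Notation FXi := (ucoef (uflip Xinv)).

Lemma Wfam_coef b : lcoef (Wfam E X Xinv b) = zflip (conjugate FX (monomial 1 (Em b)) FXi).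
Proof.
by rewrite lcoef_uflip /Wfam !(ucoef_uflip_lmul, ucoef_umul) ucoef_uflip_lzinv.
Qed.

Lemma Xinv_conv : conv FXi FX = monomial 0 1%:M.
Proof.
rewrite -ucoef_umul -ucoef_uflip_lmul -ucoef_uflip_lconst -[LHS]zflipK -[RHS]zflipK.
by rewrite -!lcoef_uflip; congr zflip; apply/funext => k; apply: hXinv.
Qed.

Lemma X_vanish_above : vanish_above FX 0.
Proof. by move=> k k0; rewrite -[k]opprK -/(zflip FX (- k)) -lcoef_uflip hX.1 //; lia. Qed.

Lemma Xinv_vanish_above : vanish_above FXi 0.
Proof.
have [Y [X0Y _]] := hX.2.
apply: (inverse_vanish_above X_vanish_above (Y := Y)) Xinv_conv.
  by rewrite -[0]oppr0 -/(zflip FX 0) -lcoef_uflip.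
by exists (uN (uflip Xinv)); apply: ucoef_vanish_above.
Qed.

Lemma Wfam_vanish_below b : vanish_below (lcoef (Wfam E X Xinv b)) (-1).
Proof.
rewrite Wfam_coef; apply: vanish_below_zflip.
have := conv_vanish_above X_vanish_above (@monomial_vanish_above _ 1 (Em b)).
by rewrite add0r => /conv_vanish_above /(_ Xinv_vanish_above); rewrite addr0.
Qed.

Lemma Wfam_comm b1 b2 k : brc (lcoef (Wfam E X Xinv b1)) (lcoef (Wfam E X Xinv b2)) k = 0.
Proof.
rewrite !Wfam_coef brc_zflip /brc.
rewrite (conjugate_comm _ _ (monomial_bdd_above _ _) (monomial_bdd_above _ _) Xinv_conv).
- by rewrite subrr.
- by exists 0; apply: X_vanish_above.
- by exists 0; apply: Xinv_vanish_above.
- exact: monomial_comm.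
Qed.
End Positive.
End Dressing.

Section Derivations.
Variables (C : fieldType) (R : comAlgType C) (d : R -> R).
Hypothesis d_der : is_Cderivation d.

Lemma Cderivation0 : d 0 = 0.
Proof. by case: d_der => d_add _ _; apply: (addrI (d 0)); rewrite -d_add !addr0. Qed.

Lemma Cderivation_scalar (c : C) : d c%:A = 0.
Proof.
case: d_der => d_add d_scale d_mul.
have d1 : d 1 = 0.
  have := d_mul 1 1; rewrite !mulr1 mul1r => d11.
  by apply: (addrI (d 1)); rewrite addr0 -d11.
by rewrite d_scale d1 scaler0.
Qed.

Lemma map_mx_Cderivation0 n : map_mx d (0 : 'M[R]_n) = 0.
Proof. by apply/matrixP => i j; rewrite !mxE Cderivation0. Qed.

Lemma map_mx_Cderivation_emb n (A : 'M[C]_n) : map_mx d (emb R A) = 0.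
Proof. by apply/matrixP => i j; rewrite !mxE Cderivation_scalar. Qed.

End Derivations.

Theorem proposition3p2
  (C : numClosedFieldType) (R : comAlgType C) (n r : nat)
  (E : 'I_r -> 'M[C]_n) (hE : max_comm_basis E)
  (D : int -> 'I_r -> R -> R)
  (hDder : forall m a, is_Cderivation (D m a))
  (hDcomm : forall m1 a1 m2 a2 (x : R), D m1 a1 (D m2 a2 x) = D m2 a2 (D m1 a1 x))
  (g ginv : useries R n) (hg : in_Gneg g)
  (hginv1 : ueqs (umul g ginv) (uone R n)) (hginv2 : ueqs (umul ginv g) (uone R n))
  (X Xinv : lseries R n) (hX : in_Gpos X)
  (hXinv1 : leqs (lmul X Xinv) (lone R n)) (hXinv2 : leqs (lmul Xinv X) (lone R n)) :
  let U := Ufam E g ginv in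
  let W := Wfam E X Xinv in
  (forall (m1 : int) (m2 : nat) (b1 a2 : 'I_r), m1 < 0 -> forall k : int,
     ucoef (uder (D m1 b1) (Bser U m2%:Z a2)) k
     - ucoef (uder (D m2%:Z a2) (Cser_u W m1 b1)) k
     - ucoef (ubr (Cser_u W m1 b1) (Bser U m2%:Z a2)) k = 0) ->
  (forall (m1 m2 : nat) (a1 a2 : 'I_r) (k : int),
     ucoef (uder (D m1%:Z a1) (Bser U m2%:Z a2)) k
     - ucoef (uder (D m2%:Z a2) (Bser U m1%:Z a1)) k
     - ucoef (ubr (Bser U m1%:Z a1) (Bser U m2%:Z a2)) k = 0) ->
  (forall (m1 m2 : int) (b1 b2 : 'I_r), m1 < 0 -> m2 < 0 -> forall k : int,
     ucoef (uder (D m1 b1) (Cser_u W m2 b2)) k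
     - ucoef (uder (D m2 b2) (Cser_u W m1 b1)) k
     - ucoef (ubr (Cser_u W m1 b1) (Cser_u W m2 b2)) k = 0) ->
  combined_solution D U W.
Proof.
move=> U W HCB HBB HCC.
have D0 m a : D m a 0 = 0 := Cderivation0 (hDder m a).
pose d m a : 'M[R]_n -> 'M[R]_n := map_mx (D m a).
have d0 m a : d m a 0 = 0 := map_mx_Cderivation0 (hDder m a) n.
have E_comm : forall a b, E a *m E b = E b *m E a by case: hE => -[].
have u_above := Ufam_vanish_above E hg hginv2.
have d_u0 m a1 a2 : d m a1 (ucoef (U a2) 0) = 0.
  by rewrite /d Ufam_coef0 // map_mx_Cderivation_emb.
have u_comm := Ufam_comm E_comm hg hginv2.
have w_below := Wfam_vanish_below E hX hXinv2.
have w_comm := Wfam_comm E_comm hX hXinv2.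
split => [m a1 a2 k | m a1 b k | m m0 b1 b2 k | m m0 b1 a k].
- rewrite ucoef_uder // ucoef_ubr ucoef_Bser.
  apply: (flow_B_u d0 u_above d_u0 u_comm _ m a1 a2 k) => m1 m2 a1' a2' k'.
  by have := HBB m1 m2 a1' a2' k'; rewrite !ucoef_uder // ucoef_ubr !ucoef_Bser.
- rewrite lcoef_lder // lcoef_lbr lcoef_Bser_l.
  apply: (flow_B_w d0 w_below _ m a1 b k) => m1 m2 b1 a2 m1_0 k'.
  have := HCB m1 m2 b1 a2 m1_0 k'.
  by rewrite !ucoef_uder // ucoef_ubr ucoef_Bser ucoef_Cser_u.
- rewrite lcoef_lder // lcoef_lbr lcoef_Cser.
  apply: (flow_C_w d0 w_below w_comm _ b1 b2 k m0) => m1 m2 b1' b2' m1_0 m2_0 k'.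
  have := HCC m1 m2 b1' b2' m1_0 m2_0 k'.
  by rewrite !ucoef_uder // ucoef_ubr !ucoef_Cser_u.
- rewrite ucoef_uder // ucoef_ubr ucoef_Cser_u.
  apply: (flow_C_u d0 u_above d_u0 _ b1 a k m0) => m1 m2 b1' a2 m1_0 k'.
  have := HCB m1 m2 b1' a2 m1_0 k'.
  by rewrite !ucoef_uder // ucoef_ubr ucoef_Bser ucoef_Cser_u.
Qed.
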